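(* Let $q'>0$, $e'\in(0,1)$, $q_{\max}>0$, and let $\mathcal D_1=\{(e,\omega'):0\le e\le1,\ 0\le\omega'\le\pi\}$, $\mathcal D_2=\{(q,\omega):0<q\le q_{\max},\ 0\le\omega\le\pi/2\}$. For each $(q,\omega)\in\mathcal D_2$, $$\min_{(e,\omega')\in\mathcal D_1}\delta_{\rm nod}=\max\{0,\ \ell^\omega_{\rm int},\ \ell^\omega_{\rm ext}\},\qquad \max_{(e,\omega')\in\mathcal D_1}\delta_{\rm nod}=\max\{u^\omega_{\rm int},\ u^\omega_{\rm ext},\ u^\omega_{\rm link}\},$$ where $\ell^\omega_{\rm int}(q,\omega)=q'-\frac{2q}{1-\cos\omega}$ (equal to $-\infty$ at $\omega=0$), $\ell^\omega_{\rm ext}(q,\omega)=q-Q'$, $u^\omega_{\rm int}(q,\omega)=p'-q$, $$u^\omega_{\rm ext}(q,\omega)=\min\Big\{\frac{2q}{1-\cos\omega}-\frac{p'}{1-\hat\xi'_*},\ \frac{2q}{1+\cos\omega}-q'\Big\},\quad \hat\xi'_*=\min\{\xi'_*,e'\},\quad \xi'_*=\frac{4q\cos\omega}{p'\sin^2\omega+\sqrt{p'^2\sin^4\omega+16q^2\cos^2\omega}},$$ $$u^\omega_{\rm link}(q,\omega)=\min\Big\{Q'-\frac{q(1+\hat e_* )}{1+\hat e_*\cos\omega},\ \frac{2q}{1-\cos\omega}-q'\Big\},\quad \hat e_*=\max\{0,\min\{e_*,1\}\},$$ $$e_*(q,\omega)=\frac{2\big(p'-q(1-e'^2)\big)}{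q(1-e'^2)+\sqrt{q^2(1-e'^2)^2+4p'\cos^2\omega\,\big(p'-q(1-e'^2)\big)}}.$$
   Context: For $q>0$, $e\in[0,1]$ and angles $\omega,\omega'$, define $r_{\pm}=\frac{q(1+e)}{1\pm e\cos\omega}$, $r'_{\pm}=\frac{q'(1+e')}{1\pm e'\cos\omega'}$ (extended-real value $+\infty$ allowed when a denominator vanishes; all functions may take values $\pm\infty$ as limits), $d^+=r'_+-r_+$, $d^-=r'_--r_-$, and the nodal distance $\delta_{\rm nod}(q,e,\omega,\omega')=\min\{|d^+|,|d^-|\}$. Also $p'=q'(1+e')$, $Q'=\frac{q'(1+e')}{1-e'}$. *)

From Stdlib Require Import Reals Lra.
Open Scope R_scope.

Inductive ER : Type := Fin (x : R) | PInf | MInf.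

(* Subtraction; the undefined forms ∞-∞ never arise in the statement below
   (they would need e' = 1); conventionally set to 0. *)
Definition er_sub (x y : ER) : ER :=
  match x, y with
  | Fin a, Fin b => Fin (a - b)
  | PInf, Fin _ | PInf, MInf | Fin _, MInf => PInf
  | MInf, Fin _ | MInf, PInf | Fin _, PInf => MInf
  | PInf, PInf | MInf, MInf => Fin 0
  end.

Definition er_abs (x : ER) : ER :=
  match x with Fin a => Fin (Rabs a) | _ => PInf end.

Definition er_le (x y : ER) : Prop :=
  match x, y with
  | Fin a, Fin b => a <= b
  | MInf, _ => True
  | _, PInf => True
  | _, _ => False
  end.

Definition er_min (x y : ER) : ER :=
  match x, y with
  | Fin a, Fin b => Fin (Rmin a b)
  | MInf, _ | _, MInf => MInf
  | PInf, z | z, PInf => z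
  end.

Definition er_max (x y : ER) : ER :=
  match x, y with
  | Fin a, Fin b => Fin (Rmax a b)
  | PInf, _ | _, PInf => PInf
  | MInf, z | z, MInf => z
  end.

Definition er_divpos (a b : R) : ER :=
  if Req_EM_T b 0 then PInf else Fin (a / b).

Definition r_plus (q e w : R) : ER := er_divpos (q * (1 + e)) (1 + e * cos w).
Definition r_minus (q e w : R) : ER := er_divpos (q * (1 + e)) (1 - e * cos w).

(* nodal distance; (q', e') are the fixed parameters of the second orbit *)
Definition delta_nod (q' e' q e w w' : R) : ER :=
  er_min (er_abs (er_sub (r_plus q' e' w') (r_plus q e w)))
         (er_abs (er_sub (r_minus q' e' w') (r_minus q e w))).

Definition p_ (q' e' : R) : R := q' * (1 + e').
Definition Q_ (q' e' : R) : R := q' * (1 + e') / (1 - e').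

Definition l_int (q' e' q w : R) : ER :=
  er_sub (Fin q') (er_divpos (2 * q) (1 - cos w)).
Definition l_ext (q' e' q w : R) : ER := Fin (q - Q_ q' e').
Definition u_int (q' e' q w : R) : ER := Fin (p_ q' e' - q).

Definition xi_star (q' e' q w : R) : R :=
  4 * q * cos w /
  (p_ q' e' * (sin w) ^ 2
   + sqrt ((p_ q' e') ^ 2 * (sin w) ^ 4 + 16 * q ^ 2 * (cos w) ^ 2)).
Definition xi_hat (q' e' q w : R) : R := Rmin (xi_star q' e' q w) e'.

Definition u_ext (q' e' q w : R) : ER :=
  er_min (er_sub (er_divpos (2 * q) (1 - cos w))
                 (Fin (p_ q' e' / (1 - xi_hat q' e' q w))))
         (er_sub (er_divpos (2 * q) (1 + cos w)) (Fin q')).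

Definition e_star (q' e' q w : R) : R :=
  2 * (p_ q' e' - q * (1 - e' ^ 2)) /
  (q * (1 - e' ^ 2)
   + sqrt ((q ^ 2) * (1 - e' ^ 2) ^ 2
           + 4 * p_ q' e' * (cos w) ^ 2 * (p_ q' e' - q * (1 - e' ^ 2)))).
Definition e_hat (q' e' q w : R) : R := Rmax 0 (Rmin (e_star q' e' q w) 1).

Definition u_link (q' e' q w : R) : ER :=
  er_min (Fin (Q_ q' e' - q * (1 + e_hat q' e' q w) / (1 + e_hat q' e' q w * cos w)))
         (er_sub (er_divpos (2 * q) (1 - cos w)) (Fin q')).

From Stdlib Require Import Reals Lra Psatz.
Open Scope R_scope.

(* Write c = cos w, y = cos w', and let a = r_+, b = r_- (first orbit) and A = r'_+, B = r'_-
   (second orbit) be the radii at the two nodes, so that delta_nod = min (|A - a|, |B - b|).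
   For fixed w the radii range over q <= a <= b <= 2q/(1-c), a <= 2q/(1+c), and
   q' <= A, B <= Q' with min (A, B) <= p'.  These ranges give the lower bounds at once and,
   through the four sign patterns of A - a and B - b, the upper bound.  If the second orbit is
   inside at both nodes one can at best balance a - A against b - B; for e = 1 this balance is
   the quadratic whose root is xi'_*.  In the crossed patterns one balances Q' - a against
   b - q', i.e. a + b = Q' + q', whose root is e_*.  Every bound is reached at an explicit
   (e, w'); for w = 0 the orbit with e = 1 is a parabola and is treated separately. *)

Lemma Rdiv_le_contravar a x y : 0 <= a -> 0 < x -> x <= y -> a / y <= a / x.
Proof.
  intros ha hx hxy; unfold Rdiv.
  apply Rmult_le_compat_l; [exact ha | apply Rinv_le_contravar; assumption].
Qed.

Lemma Rdiv_le_iff a b c : 0 < c -> a / c <= b <-> a <= b * c.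
Proof.
  intros hc; split; intros h.
  - apply Rmult_le_compat_r with (r := c) in h; [|lra].
    replace (a / c * c) with a in h by (field; lra); exact h.
  - apply Rmult_le_reg_r with c; [exact hc|].
    replace (a / c * c) with a by (field; lra); exact h.
Qed.

Lemma Rle_div_iff a b c : 0 < c -> b <= a / c <-> b * c <= a.
Proof.
  intros hc; split; intros h.
  - apply Rmult_le_compat_r with (r := c) in h; [|lra].
    replace (a / c * c) with a in h by (field; lra); exact h.
  - apply Rmult_le_reg_r with c; [exact hc|].
    replace (a / c * c) with a by (field; lra); exact h.
Qed.

Definition rad_plus (q e c : R) : R := q * (1 + e) / (1 + e * c).

Lemma rad_plus_antitone q e c1 c2 :
  0 <= q -> 0 <= e -> 0 < 1 + e * c1 -> c1 <= c2 -> rad_plus q e c2 <= rad_plus q e c1.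
Proof. intros; apply Rdiv_le_contravar; nra. Qed.

Lemma rad_plus_mono_ecc q c e1 e2 :
  0 <= q -> c <= 1 -> 0 <= e1 <= e2 -> 0 < 1 + e2 * c ->
  rad_plus q e1 c <= rad_plus q e2 c.
Proof.
  intros hq hc he h2; unfold rad_plus.
  assert (h1 : 0 < 1 + e1 * c) by nra.
  apply Rmult_le_reg_r with ((1 + e1 * c) * (1 + e2 * c)); [nra|].
  replace (q * (1 + e1) / (1 + e1 * c) * ((1 + e1 * c) * (1 + e2 * c)))
    with (q * (1 + e1) * (1 + e2 * c)) by (field; lra).
  replace (q * (1 + e2) / (1 + e2 * c) * ((1 + e1 * c) * (1 + e2 * c)))
    with (q * (1 + e2) * (1 + e1 * c)) by (field; lra).
  assert (0 <= q * ((e2 - e1) * (1 - c))) by (apply Rmult_le_pos; nra).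
  nra.
Qed.

Lemma rad_plus_ecc0 q c : rad_plus q 0 c = q.
Proof. unfold rad_plus; field. Qed.

Lemma rad_plus_ecc1 q c : 1 + c <> 0 -> rad_plus q 1 c = 2 * q / (1 + c).
Proof. intros; unfold rad_plus; replace (1 + 1 * c) with (1 + c) by ring; field; assumption. Qed.

Lemma rad_plus_cos1 q e : 0 <= e -> rad_plus q e 1 = q.
Proof. intros; unfold rad_plus; field; lra. Qed.

Lemma rad_plus_cos0 q e : rad_plus q e 0 = p_ q e.
Proof. unfold rad_plus, p_; field. Qed.

Lemma rad_plus_cosm1 q e : e < 1 -> rad_plus q e (-1) = Q_ q e.
Proof. intros; unfold rad_plus, Q_; f_equal; ring. Qed.

Lemma rad_plus_solve_ecc q r c :
  q <> 0 -> c <> 1 -> q - r * c <> 0 -> rad_plus q ((r - q) / (q - r * c)) c = r.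
Proof.
  intros; unfold rad_plus; field.
  split; [assumption|].
  replace (q - r * c + (r - q) * c) with (q * (1 - c)) by ring.
  apply Rmult_integral_contrapositive; split; lra.
Qed.

Lemma rad_plus_solve_cos q e r :
  0 < q -> 0 < e -> 0 < r -> rad_plus q e ((q * (1 + e) / r - 1) / e) = r.
Proof.
  intros; unfold rad_plus.
  replace (1 + e * ((q * (1 + e) / r - 1) / e)) with (q * (1 + e) / r) by (field; lra).
  field; repeat split; lra.
Qed.

Lemma perihelion_le_rad_plus q e c :
  0 <= q -> 0 <= e -> c <= 1 -> 0 < 1 + e * c -> q <= rad_plus q e c.
Proof.
  intros; rewrite <- (rad_plus_cos1 q e) at 1 by assumption.
  apply rad_plus_antitone; assumption.
Qed.

Lemma rad_plus_le_aphelion q e c : 0 <= q -> 0 <= e < 1 -> -1 <= c -> rad_plus q e c <= Q_ q e.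
Proof.
  intros; rewrite <- rad_plus_cosm1 by lra.
  apply rad_plus_antitone; nra.
Qed.

Lemma rad_plus_le_semilatus q e c : 0 <= q -> 0 <= e -> 0 <= c -> rad_plus q e c <= p_ q e.
Proof.
  intros; rewrite <- rad_plus_cos0.
  apply rad_plus_antitone; lra.
Qed.

Lemma rad_plus_le_parabolic q e c :
  0 <= q -> 0 <= e <= 1 -> -1 < c <= 1 -> rad_plus q e c <= 2 * q / (1 + c).
Proof.
  intros; rewrite <- rad_plus_ecc1 by lra.
  apply rad_plus_mono_ecc; lra.
Qed.

Lemma rad_plus_le_opposite q e c :
  0 <= q -> 0 <= e -> 0 <= c -> e * c < 1 -> rad_plus q e c <= rad_plus q e (- c).
Proof. intros; apply rad_plus_antitone; lra. Qed.

Definition quad (a b d x : R) : R := a * x ^ 2 + b * x - d.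

(* A root of [quad a b d] in the rationalized form of the statement; it stays valid for [a = 0]. *)
Definition quad_root (a b d : R) : R := 2 * d / (b + sqrt (b ^ 2 + 4 * a * d)).

Section QuadRoot.
Variables a b d : R.
Hypotheses (ha : 0 <= a) (hb : 0 < b) (hdisc : 0 <= b ^ 2 + 4 * a * d).

Lemma quad_root_spec : quad a b d (quad_root a b d) = 0.
Proof.
  unfold quad, quad_root.
  set (S := sqrt (b ^ 2 + 4 * a * d)).
  assert (hS : S * S = b ^ 2 + 4 * a * d) by apply sqrt_sqrt, hdisc.
  assert (hS0 : 0 <= S) by apply sqrt_pos.
  replace (a * (2 * d / (b + S)) ^ 2 + b * (2 * d / (b + S)) - d)
    with (d * (b ^ 2 + 4 * a * d - S * S) / ((b + S) * (b + S))) by (field; lra).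
  rewrite hS; field; lra.
Qed.

Lemma quad_root_nonneg : 0 <= d -> 0 <= quad_root a b d.
Proof.
  intros hd; unfold quad_root.
  apply Rmult_le_pos; [lra|].
  apply Rlt_le, Rinv_0_lt_compat.
  pose proof (sqrt_pos (b ^ 2 + 4 * a * d)); lra.
Qed.

Lemma quad_mono x y : 0 <= x <= y -> quad a b d x <= quad a b d y.
Proof.
  intros hxy; unfold quad.
  assert (0 <= a * ((y - x) * (y + x))) by (apply Rmult_le_pos; nra).
  nra.
Qed.

Lemma quad_nonpos_below_root x : 0 <= x <= quad_root a b d -> quad a b d x <= 0.
Proof. intros; rewrite <- quad_root_spec; apply quad_mono; assumption. Qed.

Lemma quad_nonneg_above_root x : 0 <= x -> quad_root a b d <= x -> 0 <= quad a b d x.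
Proof.
  intros hx hr.
  destruct (Rle_or_lt 0 d) as [hd|hd].
  - rewrite <- quad_root_spec; apply quad_mono; split; [apply quad_root_nonneg|]; assumption.
  - apply Rle_trans with (quad a b d 0); [unfold quad; lra|]. apply quad_mono; lra.
Qed.
End QuadRoot.

(* [y = cos w'], [c = cos w]; at the opposite node both cosines change sign. *)
Definition nodal_gap (q' e' y q e c : R) : R :=
  Rmin (Rabs (rad_plus q' e' y - rad_plus q e c))
       (Rabs (rad_plus q' e' (- y) - rad_plus q e (- c))).

Definition xi_root (p q c : R) : R := quad_root (2 * q * c) (p * (1 - c ^ 2)) (2 * q * c).
Definition ecc_root (p k c : R) : R := quad_root (p * c ^ 2) k (p - k).

(* [u_ext] and [u_link] of the statement, for [c = cos w < 1]. *)
Definition ext_bound (q' e' q c : R) : R :=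
  Rmin (2 * q / (1 - c) - p_ q' e' / (1 - Rmin (xi_root (p_ q' e') q c) e'))
       (2 * q / (1 + c) - q').

Definition link_bound (q' e' q c : R) : R :=
  Rmin (Q_ q' e' - rad_plus q (Rmax 0 (Rmin (ecc_root (p_ q' e') (q * (1 - e' ^ 2)) c) 1)) c)
       (2 * q / (1 - c) - q').

Lemma nodal_gap_nonneg q' e' y q e c : 0 <= nodal_gap q' e' y q e c.
Proof. apply Rmin_glb; apply Rabs_pos. Qed.

Section TwoOrbits.
Variables q' e' q c : R.
Hypotheses (hq' : 0 < q') (he' : 0 < e' < 1) (hq : 0 < q) (hc : 0 <= c <= 1).

Local Notation p := (p_ q' e').
Local Notation Q := (Q_ q' e').
Local Notation k := (q * (1 - e' ^ 2)).
(* [xh] balances a - A against b - B for e = 1, and [eh] balances the crossed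
   configuration a + b = Q + q'; both are clamped to the admissible ranges. *)
Local Notation xh := (Rmin (xi_root p q c) e').
Local Notation eh := (Rmax 0 (Rmin (ecc_root p k c) 1)).

Lemma p_pos : 0 < p.
Proof. unfold p_; nra. Qed.

Lemma second_radius_bounds y : -1 <= y <= 1 -> q' <= rad_plus q' e' y <= Q.
Proof.
  intros hy; split.
  - apply perihelion_le_rad_plus; nra.
  - apply rad_plus_le_aphelion; lra.
Qed.

Lemma second_radius_le_semilatus y :
  rad_plus q' e' y <= p \/ rad_plus q' e' (- y) <= p.
Proof.
  destruct (Rle_or_lt 0 y); [left | right]; apply rad_plus_le_semilatus; lra.
Qed.

Lemma first_radii_ge_perihelion e :
  0 <= e <= 1 -> e * c < 1 -> q <= rad_plus q e c /\ q <= rad_plus q e (- c).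
Proof. intros; split; apply perihelion_le_rad_plus; nra. Qed.

Lemma nodal_gap_ge_ext e y :
  0 <= e <= 1 -> -1 <= y <= 1 -> e * c < 1 -> q - Q <= nodal_gap q' e' y q e c.
Proof.
  intros he hy hec.
  destruct (second_radius_bounds y hy), (second_radius_bounds (- y)) as [_ hB]; [lra|].
  destruct (first_radii_ge_perihelion e he hec).
  apply Rmin_glb; rewrite Rabs_minus_sym; (eapply Rle_trans; [|apply Rle_abs]); lra.
Qed.

Lemma nodal_gap_le_ext_witness : nodal_gap q' e' 1 q 0 c <= Rabs (Q - q).
Proof.
  unfold nodal_gap; rewrite rad_plus_cosm1, !rad_plus_ecc0 by lra; apply Rmin_r.
Qed.

Lemma nodal_gap_zero_witness :
  Rmax q q' <= Q -> Rmax q q' * (1 - c) <= 2 * q ->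
  exists e y, 0 <= e <= 1 /\ -1 <= y <= 1 /\ e * c < 1 /\ nodal_gap q' e' y q e c <= 0.
Proof.
  (* t = max q q' lies in the range of b(e) as well as in that of B(y); solve b(e) = B(y) = t. *)
  set (t := Rmax q q'); intros htQ htc.
  assert (hqt : q <= t) by apply Rmax_l.
  assert (hq't : q' <= t) by apply Rmax_r.
  assert (hden : 0 < q - t * - c) by nra.
  exists ((t - q) / (q - t * - c)), (- ((q' * (1 + e') / t - 1) / e')).
  assert (he : 0 <= (t - q) / (q - t * - c) <= 1).
  { split; [apply Rle_div_iff | apply Rdiv_le_iff]; lra. }
  split; [exact he|]; split; [|split].
  - unfold Q_ in htQ; apply Rle_div_iff in htQ; [|lra].
    assert (-1 <= (q' * (1 + e') / t - 1) / e' <= 1); [|lra].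
    split; [apply Rle_div_iff | apply Rdiv_le_iff]; try lra.
    + assert (1 - e' <= q' * (1 + e') / t) by (apply Rle_div_iff; nra); lra.
    + assert (q' * (1 + e') / t <= 1 + e') by (apply Rdiv_le_iff; nra); lra.
  - assert (hed : (t - q) / (q - t * - c) * (q - t * - c) = t - q) by (field; lra).
    nra.
  - unfold nodal_gap.
    rewrite Ropp_involutive, rad_plus_solve_cos, rad_plus_solve_ecc by nra.
    rewrite Rminus_diag, Rabs_R0; apply Rmin_r.
Qed.

Lemma e_hat_bounds : 0 <= eh <= 1.
Proof.
  split; [apply Rmax_l | apply Rmax_lub; [lra | apply Rmin_r]].
Qed.

Lemma ecc_root_coeffs :
  0 <= p * c ^ 2 /\ 0 < k /\ 0 <= k ^ 2 + 4 * (p * c ^ 2) * (p - k).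
Proof.
  pose proof p_pos; pose proof (pow2_ge_0 c).
  split; [nra | split; [apply Rmult_lt_0_compat; nra|]].
  replace (k ^ 2 + 4 * (p * c ^ 2) * (p - k))
    with ((k - 2 * p * c ^ 2) ^ 2 + 4 * (p * c) ^ 2 * (1 - c ^ 2)) by ring.
  assert (0 <= 1 - c ^ 2) by nra.
  assert (0 <= (p * c) ^ 2 * (1 - c ^ 2)) by (apply Rmult_le_pos; nra).
  pose proof (pow2_ge_0 (k - 2 * p * c ^ 2)); lra.
Qed.

Lemma e_hat_pos : 0 < eh -> quad (p * c ^ 2) k (p - k) eh <= 0.
Proof.
  intros hpos; destruct ecc_root_coeffs as (ha & hb & hd).
  apply quad_nonpos_below_root; [assumption .. |].
  unfold Rmax in *; destruct Rle_dec; [|lra].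
  split; [lra | apply Rmin_l].
Qed.

Lemma e_hat_lt1 : eh < 1 -> 0 <= quad (p * c ^ 2) k (p - k) eh.
Proof.
  intros hlt; destruct ecc_root_coeffs as (ha & hb & hd).
  apply quad_nonneg_above_root; [assumption .. | apply Rmax_l |].
  unfold Rmax, Rmin, ecc_root in *; repeat destruct Rle_dec; lra.
Qed.

Lemma nodal_gap_ge_int_witness : p - q <= nodal_gap q' e' 0 q 0 c.
Proof.
  unfold nodal_gap; rewrite Ropp_0, rad_plus_cos0, !rad_plus_ecc0.
  apply Rmin_glb; apply Rle_abs.
Qed.

Lemma nodal_gap_min_attained_ext :
  q' * (1 - c) <= 2 * q ->
  exists e y, 0 <= e <= 1 /\ -1 <= y <= 1 /\ e * c < 1 /\ nodal_gap q' e' y q e c <= Rmax 0 (q - Q).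
Proof.
  intros hq'c.
  destruct (Rle_or_lt q Q) as [hqQ|hqQ].
  - assert (hq'Q : q' <= Q) by (pose proof (second_radius_bounds 0); lra).
    destruct nodal_gap_zero_witness as (e & y & he & hy & hec & h0).
    + apply Rmax_lub; assumption.
    + unfold Rmax; destruct Rle_dec; nra.
    + exists e, y; repeat split; try lra. eapply Rle_trans; [exact h0 | apply Rmax_l].
  - exists 0, 1; repeat split; try lra.
    eapply Rle_trans; [apply nodal_gap_le_ext_witness|].
    rewrite Rabs_left by lra; eapply Rle_trans; [|apply Rmax_r]; lra.
Qed.

Section NonzeroOmega.
Hypothesis hc1 : c < 1.

Local Notation U_ext := (ext_bound q' e' q c).
Local Notation U_link := (link_bound q' e' q c).

Lemma first_radii_le_parabolic e :
  0 <= e <= 1 -> rad_plus q e c <= 2 * q / (1 + c) /\ rad_plus q e (- c) <= 2 * q / (1 - c).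
Proof.
  intros he; split; [apply rad_plus_le_parabolic; lra|].
  replace (1 - c) with (1 + - c) by ring; apply rad_plus_le_parabolic; lra.
Qed.

Lemma parabolic_le_opposite : 2 * q / (1 + c) <= 2 * q / (1 - c).
Proof. apply Rdiv_le_contravar; lra. Qed.

Lemma nodal_gap_ge_int e y :
  0 <= e <= 1 -> -1 <= y <= 1 -> q' - 2 * q / (1 - c) <= nodal_gap q' e' y q e c.
Proof.
  intros he hy.
  destruct (second_radius_bounds y hy), (second_radius_bounds (- y)); [lra|].
  destruct (first_radii_le_parabolic e he); pose proof parabolic_le_opposite.
  apply Rmin_glb; (eapply Rle_trans; [|apply Rle_abs]); lra.
Qed.

Lemma nodal_gap_le_int_witness : nodal_gap q' e' (-1) q 1 c <= Rabs (q' - 2 * q / (1 - c)).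
Proof.
  unfold nodal_gap; replace (- -1) with 1 by ring; rewrite rad_plus_cos1, (rad_plus_ecc1 q (- c)) by lra.
  replace (1 + - c) with (1 - c) by ring; apply Rmin_r.
Qed.

Lemma xi_root_coeffs :
  0 <= 2 * q * c /\ 0 < p * (1 - c ^ 2) /\
  0 <= (p * (1 - c ^ 2)) ^ 2 + 4 * (2 * q * c) * (2 * q * c).
Proof.
  pose proof p_pos.
  assert (0 < p * (1 - c ^ 2)) by (apply Rmult_lt_0_compat; nra).
  split; [|split]; nra.
Qed.

Lemma xi_hat_bounds : 0 <= xh <= e' /\ quad (2 * q * c) (p * (1 - c ^ 2)) (2 * q * c) xh <= 0.
Proof.
  destruct xi_root_coeffs as (ha & hb & hd).
  assert (hr : 0 <= xi_root p q c) by (apply quad_root_nonneg; assumption).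
  assert (hx : 0 <= xh <= xi_root p q c) by (split; [apply Rmin_glb | apply Rmin_l]; lra).
  split; [split; [lra | apply Rmin_r]|].
  apply quad_nonpos_below_root; assumption.
Qed.

Lemma parabolic_difference x :
  -1 < x < 1 ->
  (2 * q / (1 + c) - p / (1 + x) - (2 * q / (1 - c) - p / (1 - x))) * ((1 - x ^ 2) * (1 - c ^ 2))
  = 2 * quad (2 * q * c) (p * (1 - c ^ 2)) (2 * q * c) x.
Proof. intros; unfold quad; field; repeat split; lra. Qed.

Lemma radii_sum_difference E :
  0 <= E <= 1 ->
  (rad_plus q E c + rad_plus q E (- c) - (Q + q')) * ((1 - E ^ 2 * c ^ 2) * (1 - e' ^ 2))
  = 2 * quad (p * c ^ 2) k (p - k) E.
Proof. intros; unfold rad_plus, quad, Q_, p_; field; repeat split; nra. Qed.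

Lemma inner_le_ext y :
  -1 <= y <= 1 ->
  Rmin (2 * q / (1 + c) - rad_plus q' e' y) (2 * q / (1 - c) - rad_plus q' e' (- y)) <= U_ext.
Proof.
  intros hy; unfold ext_bound.
  pose proof p_pos; destruct xi_hat_bounds as [hx hg].
  destruct (second_radius_bounds y hy) as [hA _].
  change (rad_plus q' e' y) with (p / (1 + e' * y)) in *.
  change (rad_plus q' e' (- y)) with (p / (1 + e' * - y)).
  apply Rmin_glb; [|eapply Rle_trans; [apply Rmin_l | lra]].
  destruct (Rle_or_lt xh (e' * y)) as [hxy|hxy].
  - eapply Rle_trans; [apply Rmin_r|].
    assert (p / (1 - xh) <= p / (1 + e' * - y)) by (apply Rdiv_le_contravar; nra).
    lra.
  - eapply Rle_trans; [apply Rmin_l|].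
    assert (p / (1 + xh) <= p / (1 + e' * y)) by (apply Rdiv_le_contravar; nra).
    pose proof (parabolic_difference xh ltac:(lra)).
    assert (0 < (1 - xh ^ 2) * (1 - c ^ 2)) by (apply Rmult_lt_0_compat; nra).
    nra.
Qed.

Lemma crossed_le_link e :
  0 <= e <= 1 -> Rmin (Q - rad_plus q e c) (rad_plus q e (- c) - q') <= U_link.
Proof.
  intros he; unfold link_bound.
  pose proof e_hat_bounds as hE.
  apply Rmin_glb; [|destruct (first_radii_le_parabolic e he); eapply Rle_trans; [apply Rmin_r | lra]].
  destruct (Rle_or_lt eh e) as [hle|hlt].
  - assert (rad_plus q eh c <= rad_plus q e c) by (apply rad_plus_mono_ecc; nra).
    eapply Rle_trans; [apply Rmin_l | lra].
  - (* below the balanced eccentricity, [b] is smaller still and [a + b <= Q + q'] *)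
    assert (rad_plus q e (- c) <= rad_plus q eh (- c)) by (apply rad_plus_mono_ecc; nra).
    pose proof (e_hat_pos ltac:(lra)); pose proof (radii_sum_difference eh hE).
    assert (0 <= eh * c < 1) by (split; nra).
    assert (0 < (1 - eh ^ 2 * c ^ 2) * (1 - e' ^ 2)) by (apply Rmult_lt_0_compat; nra).
    eapply Rle_trans; [apply Rmin_r | nra].
Qed.

Lemma nodal_gap_le_cases e y :
  0 <= e <= 1 -> -1 <= y <= 1 ->
  nodal_gap q' e' y q e c <=
  Rmax (p - q)
    (Rmax (Rmin (2 * q / (1 + c) - rad_plus q' e' y) (2 * q / (1 - c) - rad_plus q' e' (- y)))
          (Rmin (Q - rad_plus q e c) (rad_plus q e (- c) - q'))).
Proof.
  intros he hy.
  assert (hec : e * c < 1) by nra.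
  destruct (second_radius_bounds y hy) as [hA hA'].
  destruct (second_radius_bounds (- y)) as [hB hB']; [lra|].
  destruct (first_radii_ge_perihelion e he hec) as [ha hb].
  destruct (first_radii_le_parabolic e he) as [ha' hb'].
  pose proof (rad_plus_le_opposite q e c ltac:(lra) ltac:(lra) ltac:(lra) hec) as hab.
  pose proof (second_radius_le_semilatus y) as hsemi.
  unfold nodal_gap.
  set (A := rad_plus q' e' y) in *; set (B := rad_plus q' e' (- y)) in *.
  set (a := rad_plus q e c) in *; set (b := rad_plus q e (- c)) in *.
  destruct (Rle_or_lt a A), (Rle_or_lt b B).
  - eapply Rle_trans; [|apply Rmax_l].
    rewrite !Rabs_pos_eq by lra; unfold Rmin; destruct Rle_dec, hsemi; lra.
  - eapply Rle_trans; [|eapply Rle_trans; [apply Rmax_r | apply Rmax_r]].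
    rewrite Rabs_pos_eq, Rabs_left by lra; unfold Rmin; repeat destruct Rle_dec; lra.
  - eapply Rle_trans; [|eapply Rle_trans; [apply Rmax_r | apply Rmax_r]].
    rewrite Rabs_left, Rabs_pos_eq by lra; unfold Rmin; repeat destruct Rle_dec; lra.
  - eapply Rle_trans; [|eapply Rle_trans; [apply Rmax_l | apply Rmax_r]].
    rewrite !Rabs_left by lra; unfold Rmin; repeat destruct Rle_dec; lra.
Qed.

Lemma nodal_gap_le_upper e y :
  0 <= e <= 1 -> -1 <= y <= 1 ->
  nodal_gap q' e' y q e c <= Rmax (p - q) (Rmax U_ext U_link).
Proof.
  intros he hy.
  eapply Rle_trans; [apply nodal_gap_le_cases; assumption|].
  apply Rle_max_compat_l.
  eapply Rle_trans; [apply Rle_max_compat_r, inner_le_ext, hy|].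
  apply Rle_max_compat_l, crossed_le_link, he.
Qed.

Lemma nodal_gap_ge_ext_witness : U_ext <= nodal_gap q' e' (xh / e') q 1 c.
Proof.
  unfold ext_bound, nodal_gap.
  pose proof p_pos; destruct xi_hat_bounds as [hx hg].
  rewrite (rad_plus_ecc1 q c), (rad_plus_ecc1 q (- c)) by lra.
  change (rad_plus q' e' (xh / e')) with (p / (1 + e' * (xh / e'))).
  change (rad_plus q' e' (- (xh / e'))) with (p / (1 + e' * - (xh / e'))).
  replace (1 + e' * (xh / e')) with (1 + xh) by (field; lra).
  replace (1 + e' * - (xh / e')) with (1 - xh) by (field; lra).
  replace (1 + - c) with (1 - c) by ring.
  apply Rmin_glb; rewrite Rabs_minus_sym; (eapply Rle_trans; [|apply Rle_abs]); [|apply Rmin_l].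
  assert (hcase : quad (2 * q * c) (p * (1 - c ^ 2)) (2 * q * c) xh = 0 \/ xh = e').
  { destruct xi_root_coeffs as (ha & hb & hd).
    unfold Rmin; destruct Rle_dec; [left; apply quad_root_spec; assumption | right; reflexivity]. }
  destruct hcase as [hroot|hext].
  - pose proof (parabolic_difference xh ltac:(lra)) as hdiff.
    assert (0 < (1 - xh ^ 2) * (1 - c ^ 2)) by (apply Rmult_lt_0_compat; nra).
    rewrite hroot, Rmult_0_r in hdiff.
    apply Rmult_integral in hdiff as [hdiff|hdiff]; [|lra].
    eapply Rle_trans; [apply Rmin_l | lra].
  - rewrite hext; replace (p / (1 + e')) with q' by (unfold p_; field; lra).
    apply Rmin_r.
Qed.

Lemma nodal_gap_ge_link_witness : U_link <= nodal_gap q' e' (-1) q eh c.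
Proof.
  unfold link_bound, nodal_gap.
  pose proof e_hat_bounds as hE.
  replace (- -1) with 1 by ring.
  rewrite rad_plus_cosm1, rad_plus_cos1 by lra.
  apply Rmin_glb; [eapply Rle_trans; [apply Rmin_l | apply Rle_abs]|].
  rewrite Rabs_minus_sym; eapply Rle_trans; [|apply Rle_abs].
  destruct (Rle_or_lt 1 eh) as [hone|hlt].
  - replace eh with 1 by lra.
    rewrite (rad_plus_ecc1 q (- c)) by lra; replace (1 + - c) with (1 - c) by ring.
    apply Rmin_r.
  - (* above the balanced eccentricity, [a + b >= Q + q'] *)
    pose proof (e_hat_lt1 hlt); pose proof (radii_sum_difference eh hE).
    assert (0 <= eh * c < 1) by (split; nra).
    assert (0 < (1 - eh ^ 2 * c ^ 2) * (1 - e' ^ 2)) by (apply Rmult_lt_0_compat; nra).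
    eapply Rle_trans; [apply Rmin_l | nra].
Qed.

Lemma nodal_gap_min_attained :
  exists e y, 0 <= e <= 1 /\ -1 <= y <= 1 /\ e * c < 1 /\
    nodal_gap q' e' y q e c <= Rmax 0 (Rmax (q' - 2 * q / (1 - c)) (q - Q)).
Proof.
  destruct (Rle_or_lt (q' - 2 * q / (1 - c)) 0) as [hint|hint].
  - destruct nodal_gap_min_attained_ext as (e & y & he & hy & hec & hgap).
    + assert (hq'c : q' <= 2 * q / (1 - c)) by lra.
      apply Rle_div_iff in hq'c; lra.
    + exists e, y; repeat split; try lra.
      eapply Rle_trans; [exact hgap|].
      apply Rle_max_compat_l, Rmax_r.
  - exists 1, (-1); repeat split; try lra.
    eapply Rle_trans; [apply nodal_gap_le_int_witness|].
    rewrite Rabs_pos_eq by lra.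
    eapply Rle_trans; [|apply Rmax_r]; apply Rmax_l.
Qed.

Lemma nodal_gap_max_attained :
  exists e y, 0 <= e <= 1 /\ -1 <= y <= 1 /\ e * c < 1 /\
    Rmax (p - q) (Rmax U_ext U_link) <= nodal_gap q' e' y q e c.
Proof.
  destruct (Rle_or_lt (Rmax U_ext U_link) (p - q)) as [hint|hint].
  - exists 0, 0; repeat split; try lra.
    rewrite Rmax_left by assumption; apply nodal_gap_ge_int_witness.
  - rewrite Rmax_right by lra.
    destruct (Rle_or_lt U_link U_ext) as [hext|hlink].
    + rewrite Rmax_left by assumption.
      destruct xi_hat_bounds as [hx _].
      exists 1, (xh / e'); repeat split; try lra;
        [apply Rle_div_iff | apply Rdiv_le_iff | apply nodal_gap_ge_ext_witness]; lra.
    + rewrite Rmax_right by lra.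
      pose proof e_hat_bounds.
      exists eh, (-1); repeat split; try lra; [nra | apply nodal_gap_ge_link_witness].
Qed.

End NonzeroOmega.
End TwoOrbits.

Lemma er_divpos_fin a b : b <> 0 -> er_divpos a b = Fin (a / b).
Proof. intros; unfold er_divpos; destruct Req_EM_T; [contradiction | reflexivity]. Qed.

Lemma er_divpos_zero a b : b = 0 -> er_divpos a b = PInf.
Proof. intros; unfold er_divpos; destruct Req_EM_T; [reflexivity | contradiction]. Qed.

Lemma r_plus_fin q e w : 0 < 1 + e * cos w -> r_plus q e w = Fin (rad_plus q e (cos w)).
Proof. intros; unfold r_plus; rewrite er_divpos_fin by lra; reflexivity. Qed.

Lemma r_minus_fin q e w : e * cos w < 1 -> r_minus q e w = Fin (rad_plus q e (- cos w)).
Proof.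
  intros; unfold r_minus; rewrite er_divpos_fin by lra.
  unfold rad_plus; do 2 f_equal; ring.
Qed.

Lemma delta_nod_fin q' e' q e w w' :
  0 < e' < 1 -> 0 <= e -> 0 <= cos w -> e * cos w < 1 ->
  delta_nod q' e' q e w w' = Fin (nodal_gap q' e' (cos w') q e (cos w)).
Proof.
  intros; pose proof (COS_bound w').
  unfold delta_nod; rewrite !r_plus_fin, !r_minus_fin by nra; reflexivity.
Qed.

(* For [cos w = 1] the orbit with [e = 1] is a parabola whose second node is at infinity. *)
Lemma delta_nod_parabolic q' e' q w w' :
  0 < e' < 1 -> cos w = 1 ->
  delta_nod q' e' q 1 w w' = Fin (Rabs (rad_plus q' e' (cos w') - q)).
Proof.
  intros he hc; pose proof (COS_bound w').
  unfold delta_nod, r_minus at 2.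
  rewrite !r_plus_fin, r_minus_fin, er_divpos_zero by nra.
  rewrite hc, rad_plus_cos1 by lra; reflexivity.
Qed.

Definition extrema_on_D1 (F : R -> R -> ER) (m M : ER) : Prop :=
  ((exists e w', 0 <= e <= 1 /\ 0 <= w' <= PI /\ F e w' = m) /\
   (forall e w', 0 <= e <= 1 -> 0 <= w' <= PI -> er_le m (F e w'))) /\
  ((exists e w', 0 <= e <= 1 /\ 0 <= w' <= PI /\ F e w' = M) /\
   (forall e w', 0 <= e <= 1 -> 0 <= w' <= PI -> er_le (F e w') M)).

Lemma extrema_on_D1_fin (F : R -> R -> ER) (L U : R) :
  (forall e w', 0 <= e <= 1 -> 0 <= w' <= PI -> exists d, F e w' = Fin d /\ L <= d <= U) ->
  (exists e w', 0 <= e <= 1 /\ 0 <= w' <= PI /\ exists d, F e w' = Fin d /\ d <= L) ->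
  (exists e w', 0 <= e <= 1 /\ 0 <= w' <= PI /\ exists d, F e w' = Fin d /\ U <= d) ->
  extrema_on_D1 F (Fin L) (Fin U).
Proof.
  intros hbounds (e1 & w1 & he1 & hw1 & d1 & hF1 & hd1) (e2 & w2 & he2 & hw2 & d2 & hF2 & hd2).
  split; split.
  - exists e1, w1; split; [exact he1 | split; [exact hw1|]].
    destruct (hbounds e1 w1 he1 hw1) as (d & hF & hd); rewrite hF1 in hF |- *.
    injection hF as <-; f_equal; lra.
  - intros e w' he hw'; destruct (hbounds e w' he hw') as (d & -> & hd); simpl; lra.
  - exists e2, w2; split; [exact he2 | split; [exact hw2|]].
    destruct (hbounds e2 w2 he2 hw2) as (d & hF & hd); rewrite hF2 in hF |- *.
    injection hF as <-; f_equal; lra.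
  - intros e w' he hw'; destruct (hbounds e w' he hw') as (d & -> & hd); simpl; lra.
Qed.

Lemma delta_nod_witness q' e' q w (P : R -> Prop) :
  0 < e' < 1 -> 0 <= cos w ->
  (exists e y, 0 <= e <= 1 /\ -1 <= y <= 1 /\ e * cos w < 1 /\
     P (nodal_gap q' e' y q e (cos w))) ->
  exists e w', 0 <= e <= 1 /\ 0 <= w' <= PI /\ exists d, delta_nod q' e' q e w w' = Fin d /\ P d.
Proof.
  intros he' hc (e & y & he & hy & hec & hP).
  exists e, (acos y); split; [exact he | split; [apply acos_bound|]].
  exists (nodal_gap q' e' y q e (cos w)); split; [|exact hP].
  rewrite delta_nod_fin, cos_acos by lra; reflexivity.
Qed.

Lemma xi_star_eq q' e' q w : xi_star q' e' q w = xi_root (p_ q' e') q (cos w).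
Proof.
  assert (hs : sin w ^ 2 = 1 - cos w ^ 2) by (pose proof (sin2_cos2 w); unfold Rsqr in *; lra).
  unfold xi_star, xi_root, quad_root.
  replace (sin w ^ 4) with ((sin w ^ 2) ^ 2) by ring; rewrite hs.
  f_equal; [ring|]; do 3 f_equal; ring.
Qed.

Lemma e_star_eq q' e' q w : e_star q' e' q w = ecc_root (p_ q' e') (q * (1 - e' ^ 2)) (cos w).
Proof. unfold e_star, ecc_root, quad_root; do 4 f_equal; ring. Qed.

Lemma delta_nod_extrema_nonzero_omega q' e' q w :
  0 < q' -> 0 < e' < 1 -> 0 < q -> 0 <= cos w < 1 ->
  extrema_on_D1 (fun e w' => delta_nod q' e' q e w w')
    (Fin (Rmax 0 (Rmax (q' - 2 * q / (1 - cos w)) (q - Q_ q' e'))))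
    (Fin (Rmax (p_ q' e' - q) (Rmax (ext_bound q' e' q (cos w)) (link_bound q' e' q (cos w))))).
Proof.
  intros hq' he' hq hc.
  apply extrema_on_D1_fin.
  - intros e w' he hw'; pose proof (COS_bound w').
    exists (nodal_gap q' e' (cos w') q e (cos w)); rewrite delta_nod_fin by nra.
    split; [reflexivity | split; [repeat apply Rmax_lub|]].
    + apply nodal_gap_nonneg.
    + apply nodal_gap_ge_int; lra.
    + apply nodal_gap_ge_ext; nra.
    + apply nodal_gap_le_upper; lra.
  - apply delta_nod_witness, nodal_gap_min_attained; lra.
  - apply delta_nod_witness, nodal_gap_max_attained; lra.
Qed.

Lemma delta_nod_extrema_zero_omega q' e' q w :
  0 < q' -> 0 < e' < 1 -> 0 < q -> cos w = 1 ->
  extrema_on_D1 (fun e w' => delta_nod q' e' q e w w')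
    (Fin (Rmax 0 (q - Q_ q' e')))
    (Fin (Rmax (p_ q' e' - q) (Rmax (q - q') (Q_ q' e' - q)))).
Proof.
  intros hq' he' hq hc.
  assert (hpQ : p_ q' e' <= Q_ q' e')
    by (rewrite <- (rad_plus_cos0 q' e'); apply rad_plus_le_aphelion; lra).
  assert (habs : forall y, -1 <= y <= 1 ->
            q - Q_ q' e' <= Rabs (rad_plus q' e' y - q) <=
            Rmax (p_ q' e' - q) (Rmax (q - q') (Q_ q' e' - q))).
  { intros y hy; destruct (second_radius_bounds q' e' hq' he' y hy).
    split; [rewrite Rabs_minus_sym; eapply Rle_trans; [|apply Rle_abs]; lra|].
    eapply Rle_trans; [|apply Rmax_r].
    unfold Rmax; destruct Rle_dec; apply Rabs_le; lra. }
  apply extrema_on_D1_fin.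
  - intros e w' he hw'; pose proof (COS_bound w') as hy.
    destruct (Rlt_or_le e 1) as [he1|he1].
    + exists (nodal_gap q' e' (cos w') q e (cos w)); rewrite delta_nod_fin by nra.
      split; [reflexivity | split].
      { apply Rmax_lub; [apply nodal_gap_nonneg | apply nodal_gap_ge_ext; nra]. }
      eapply Rle_trans; [apply Rmin_l|].
      rewrite hc, rad_plus_cos1 by lra; apply habs, hy.
    + replace e with 1 by lra.
      exists (Rabs (rad_plus q' e' (cos w') - q)); rewrite delta_nod_parabolic by lra.
      split; [reflexivity | split; [apply Rmax_lub; [apply Rabs_pos|]|]]; apply habs, hy.
  - apply delta_nod_witness; [lra | lra|].
    rewrite hc; apply nodal_gap_min_attained_ext; lra.
  - destruct (Rle_or_lt (Q_ q' e' - q) (q - q')) as [hleft|hright].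
    + exists 1, 0; split; [lra | split; [pose proof PI_RGT_0; lra|]].
      rewrite delta_nod_parabolic, cos_0 by lra.
      eexists; split; [reflexivity|].
      rewrite rad_plus_cos1, Rabs_minus_sym by lra.
      eapply Rle_trans; [|apply Rle_abs]; repeat apply Rmax_lub; lra.
    + exists 1, PI; split; [lra | split; [pose proof PI_RGT_0; lra|]].
      rewrite delta_nod_parabolic, cos_PI, rad_plus_cosm1 by lra.
      eexists; split; [reflexivity|].
      eapply Rle_trans; [|apply Rle_abs]; repeat apply Rmax_lub; lra.
Qed.

Theorem proposition1 (q' e' qmax : R) (hq' : 0 < q') (he' : 0 < e' < 1)
  (hqmax : 0 < qmax) (q w : R) (hq : 0 < q <= qmax) (hw : 0 <= w <= PI / 2) :
  ((exists e w', 0 <= e <= 1 /\ 0 <= w' <= PI /\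
       delta_nod q' e' q e w w' =
       er_max (Fin 0) (er_max (l_int q' e' q w) (l_ext q' e' q w))) /\
   (forall e w', 0 <= e <= 1 -> 0 <= w' <= PI ->
       er_le (er_max (Fin 0) (er_max (l_int q' e' q w) (l_ext q' e' q w)))
             (delta_nod q' e' q e w w'))) /\
  ((exists e w', 0 <= e <= 1 /\ 0 <= w' <= PI /\
       delta_nod q' e' q e w w' =
       er_max (u_int q' e' q w) (er_max (u_ext q' e' q w) (u_link q' e' q w))) /\
   (forall e w', 0 <= e <= 1 -> 0 <= w' <= PI ->
       er_le (delta_nod q' e' q e w w')
             (er_max (u_int q' e' q w) (er_max (u_ext q' e' q w) (u_link q' e' q w))))).
Proof.
  (* [qmax] only bounds the domain of [q]; the identities hold for every [q > 0]. *)
  assert (hc : 0 <= cos w <= 1) by (split; [apply cos_ge_0 | apply COS_bound]; lra).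
  change (extrema_on_D1 (fun e w' => delta_nod q' e' q e w w')
            (er_max (Fin 0) (er_max (l_int q' e' q w) (l_ext q' e' q w)))
            (er_max (u_int q' e' q w) (er_max (u_ext q' e' q w) (u_link q' e' q w)))).
  unfold l_int, l_ext, u_int, u_ext, u_link, xi_hat, e_hat.
  rewrite xi_star_eq, e_star_eq.
  destruct (Rlt_or_le (cos w) 1) as [hc1|hc1].
  - rewrite !er_divpos_fin by lra.
    apply delta_nod_extrema_nonzero_omega; lra.
  - assert (hcos : cos w = 1) by lra.
    rewrite (er_divpos_zero _ (1 - cos w)), er_divpos_fin by lra.
    rewrite hcos; cbn [er_sub er_max er_min].
    set (E := Rmax 0 (Rmin _ 1)); assert (hE : 0 <= E) by apply Rmax_l.
    replace (q * (1 + E) / (1 + E * 1)) with q by (field; lra).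
    replace (2 * q / (1 + 1)) with q by field.
    apply delta_nod_extrema_zero_omega; lra.
Qed.
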